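(* Let $n\ge 4$ with $n\equiv 3\pmod 6$, and let $G=P_4\cup P_{n-5}\cup K_1$ (disjoint union of a path on $4$ vertices, a path on $n-5$ vertices, and an isolated vertex). Then $\operatorname{rank}(A_G+I_n)=\operatorname{rank}(A_{\overline G}+I_n)=n$.
   Context: All graphs are simple. $P_m$ is the path on $m$ vertices, $K_1$ a single vertex, and $\cup$ denotes disjoint union of graphs. $A_G$ denotes the $n\times n$ adjacency matrix of $G$, $\overline{G}$ the complement of $G$, $I_n$ the identity matrix, and rank is over $\mathbb{R}$. *)

From mathcomp Require Import all_boot all_order all_algebra.
Set Implicit Arguments. Unset Strict Implicit. Unset Printing Implicit Defensive.
Import GRing.Theory Num.Theory.
Local Open Scope ring_scope.

(* A simple graph on vertex set 'I_n is a symmetric irreflexive relation;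
   all constructions below produce such relations. *)
Notation graph n := (rel (ordinal n)).

Definition path_graph (m : nat) : graph m :=
  fun i j => (i.+1 == j :> nat) || (j.+1 == i :> nat).

Definition K1 : graph 1 := fun _ _ => false.

Definition gunion m k (g1 : graph m) (g2 : graph k) : graph (m + k) :=
  fun i j => match split i, split j with
             | inl a, inl b => g1 a b
             | inr a, inr b => g2 a b
             | _, _ => false
             end.

Definition gcompl n (g : graph n) : graph n := fun i j => (i != j) && ~~ g i j.

Definition adjmx (R : nzRingType) n (g : graph n) : 'M[R]_n :=
  \matrix_(i, j) (g i j)%:R.
Arguments path_graph m : clear implicits.
Arguments adjmx R {n} g.

(* A row vector u in the left kernel of A_G + c I splits along the components
   of G.  On a path P_m the kernel equations u_(i-1) + c u_i + u_(i+1) = 0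
   force u_i = f_c(i) u_0 with f_c a Chebyshev-type sequence, and the phantom
   entry u_m = 0 then kills u unless f_c(m) = 0.  For c = 1 the sequence is
   1, -1, 0 repeated, so A_G + I is nonsingular when no path length is
   2 mod 3.  For the complement, A_(G^c) + I = J - A_G: the isolated vertex
   forces the coordinate sum of u to vanish, leaving u A_G = 0, and f_0 does
   not vanish at even lengths. *)
From mathcomp Require Import all_boot all_order all_algebra ring zify.
Set Implicit Arguments. Unset Strict Implicit. Unset Printing Implicit Defensive.
Import GRing.Theory Num.Theory.
Local Open Scope ring_scope.

Section AdjacencyKernels.
Variable R : realFieldType.

(* f_c of the header: the solution of y_(i+1) = - y_(i-1) - c y_i with
   y_(-1) = 0 and y_0 = 1. *)
Fixpoint path_seq (c : R) (i : nat) : R :=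
  match i with
  | 0 => 1
  | i1.+1 => if i1 is i2.+1 then - path_seq c i2 - c * path_seq c i1 else - c
  end.

Lemma path_seqSS c i : path_seq c i.+2 = - path_seq c i - c * path_seq c i.+1.
Proof. by []. Qed.

Lemma path_seq1_mod3 i : path_seq 1 i = path_seq 1 (i %% 3).
Proof.
elim/ltn_ind: i => -[|[|[|i]]] IH //.
rewrite -addn3 modnDr -IH; last lia.
by rewrite addn3 !path_seqSS; ring.
Qed.

Lemma path_seq1_neq0 i : (i %% 3 != 2)%N -> path_seq 1 i != 0.
Proof.
rewrite path_seq1_mod3; have : (i %% 3 < 3)%N by rewrite ltn_mod.
by case: (i %% 3)%N => [|[|[|]]] //= _ _; rewrite ?oppr_eq0 oner_neq0.
Qed.

Lemma path_seq0_double k : path_seq 0 k.*2 = (-1) ^+ k.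
Proof. by elim: k => // k IH; rewrite doubleS path_seqSS mul0r subr0 IH exprS mulN1r. Qed.

Lemma path_seq0_neq0 i : ~~ odd i -> path_seq 0 i != 0.
Proof.
move=> even_i; rewrite -[i]odd_double_half (negbTE even_i) add0n.
by rewrite path_seq0_double signr_eq0.
Qed.

Section Recurrence.
Variables (c : R) (N : nat) (y : nat -> R).
Hypothesis y_rec :
  forall j, (j < N)%N -> (if j is j'.+1 then y j' else 0) + c * y j + y j.+1 = 0.

Lemma path_recurrence_solution i : (i <= N)%N -> y i = path_seq c i * y 0.
Proof.
have two_steps k : (k < N)%N ->
    y k = path_seq c k * y 0 /\ y k.+1 = path_seq c k.+1 * y 0.
  elim: k => [|k IH] kN.
    split; first by rewrite mul1r.
    have /eqP := y_rec kN; rewrite add0r addrC addr_eq0 => /eqP ->.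
    by rewrite mulNr.
  have [yk yk1] := IH (ltnW kN); split=> //.
  have /eqP := y_rec kN; rewrite yk yk1 addrC addr_eq0 => /eqP ->.
  by rewrite path_seqSS; ring.
by case: i => [|i] iN; [rewrite mul1r | exact: (two_steps i iN).2].
Qed.

Lemma path_recurrence_vanish :
  y N = 0 -> path_seq c N != 0 -> forall i, (i <= N)%N -> y i = 0.
Proof.
move=> yN fN_neq0 i iN.
have y0 : y 0%N = 0.
  move: yN; rewrite path_recurrence_solution // => /eqP.
  by rewrite mulf_eq0 (negbTE fN_neq0) => /eqP.
by rewrite path_recurrence_solution // y0 mulr0.
Qed.

End Recurrence.

(* The left kernel of [adjmx R g + c%:M] is trivial; stated on coordinate
   functions so that it restricts to the components of a disjoint union. *)
Definition trivial_kernel (c : R) m (g : graph m) :=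
  forall u : 'I_m -> R,
    (forall j, \sum_i u i * (g i j)%:R + c * u j = 0) -> forall i, u i = 0.

Lemma rank_adj_shift c m (g : graph m) :
  trivial_kernel c g -> \rank (adjmx R g + c%:M)%R = m.
Proof.
move=> g_ker; apply/eqP/inj_row_free => u u_ker; apply/rowP => i; rewrite mxE.
apply: (g_ker (u 0)) => j; move/rowP/(_ j): u_ker.
rewrite mulmxDr mul_mx_scalar !mxE => ker_j; rewrite -[RHS]ker_j.
by congr (_ + _); apply: eq_bigr => k _; rewrite mxE.
Qed.

Definition ext0 m (u : 'I_m -> R) (i : nat) : R := oapp u 0 (insub i).

Lemma ext0_val m (u : 'I_m -> R) (i : 'I_m) : ext0 u i = u i.
Proof. by rewrite /ext0 valK. Qed.

Lemma ext0_out m (u : 'I_m -> R) i : (m <= i)%N -> ext0 u i = 0.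
Proof. by move=> mi; rewrite /ext0 insubF // ltnNge mi. Qed.

Lemma sum_delta m (u : 'I_m -> R) a :
  \sum_(i < m) u i * (i == a :> nat)%:R = ext0 u a.
Proof.
have [am | ma] := ltnP a m; last first.
  rewrite ext0_out // big1 // => i _.
  by rewrite (ltn_eqF (leq_trans (ltn_ord i) ma)) mulr0.
rewrite (bigD1 (Ordinal am)) //= eqxx mulr1 big1 ?addr0 => [|i /negbTE i_neq].
  exact: esym (ext0_val u (Ordinal am)).
by rewrite -val_eqE /= in i_neq; rewrite i_neq mulr0.
Qed.

Lemma sum_path_adj m (u : 'I_m -> R) (j : 'I_m) :
  \sum_i u i * (path_graph m i j)%:R =
    (if val j is j'.+1 then ext0 u j' else 0) + ext0 u j.+1.
Proof.
have split_edge (i : 'I_m) : (path_graph m i j)%:R =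
    (i.+1 == j :> nat)%:R + (i == j.+1 :> nat)%:R :> R.
  rewrite /path_graph [(j.+1 == _)]eq_sym.
  case: eqP => [ij|_]; case: eqP => [ij'|_]; rewrite ?addr0 ?add0r //; lia.
under eq_bigr do rewrite split_edge mulrDr.
rewrite big_split /= sum_delta; congr (_ + _).
case: j {split_edge} => -[|j] /= _; last exact: sum_delta.
by rewrite big1 // => i _; rewrite mulr0.
Qed.

Lemma trivial_kernel_path c m :
  path_seq c m != 0 -> trivial_kernel c (path_graph m).
Proof.
move=> fm_neq0 u u_ker i; rewrite -ext0_val.
apply: (path_recurrence_vanish (c := c) (N := m)) => //; last exact: ltnW.
- move=> j jm; have := u_ker (Ordinal jm).
  by rewrite sum_path_adj [ext0 u j](ext0_val u (Ordinal jm)) addrAC.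
- exact: ext0_out.
Qed.

Lemma trivial_kernel_K1 : trivial_kernel 1 K1.
Proof.
move=> u u_ker i; have := u_ker ord0.
by rewrite big1 ?add0r ?mul1r ?ord1 // => k _; rewrite mulr0.
Qed.

Lemma gunion_ll m k (g1 : graph m) (g2 : graph k) i j :
  gunion g1 g2 (lshift k i) (lshift k j) = g1 i j.
Proof. by rewrite /gunion -!/(unsplit (inl _)) !unsplitK. Qed.

Lemma gunion_lr m k (g1 : graph m) (g2 : graph k) i j :
  gunion g1 g2 (lshift k i) (rshift m j) = false.
Proof. by rewrite /gunion -/(unsplit (inl _)) -/(unsplit (inr _)) !unsplitK. Qed.

Lemma gunion_rl m k (g1 : graph m) (g2 : graph k) i j :
  gunion g1 g2 (rshift m i) (lshift k j) = false.
Proof. by rewrite /gunion -/(unsplit (inl _)) -/(unsplit (inr _)) !unsplitK. Qed.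

Lemma gunion_rr m k (g1 : graph m) (g2 : graph k) i j :
  gunion g1 g2 (rshift m i) (rshift m j) = g2 i j.
Proof. by rewrite /gunion -!/(unsplit (inr _)) !unsplitK. Qed.

Lemma sum_gunion_l m k (g1 : graph m) (g2 : graph k) (u : 'I_(m + k) -> R) j :
  \sum_i u i * (gunion g1 g2 i (lshift k j))%:R =
    \sum_i u (lshift k i) * (g1 i j)%:R.
Proof.
rewrite big_split_ord /= [X in _ + X]big1 ?addr0 => [|i _].
  by apply: eq_bigr => i _; rewrite gunion_ll.
by rewrite gunion_rl mulr0.
Qed.

Lemma sum_gunion_r m k (g1 : graph m) (g2 : graph k) (u : 'I_(m + k) -> R) j :
  \sum_i u i * (gunion g1 g2 i (rshift m j))%:R =
    \sum_i u (rshift m i) * (g2 i j)%:R.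
Proof.
rewrite big_split_ord /= big1 ?add0r => [|i _].
  by apply: eq_bigr => i _; rewrite gunion_rr.
by rewrite gunion_lr mulr0.
Qed.

Lemma trivial_kernel_gunion c m k (g1 : graph m) (g2 : graph k) :
  trivial_kernel c g1 -> trivial_kernel c g2 -> trivial_kernel c (gunion g1 g2).
Proof.
move=> g1_ker g2_ker u u_ker i; case: (split_ordP i) => [i1 ->|i2 ->].
  by apply: (g1_ker (fun i => u (lshift k i))) => j; rewrite -(sum_gunion_l g1 g2) u_ker.
by apply: (g2_ker (fun i => u (rshift m i))) => j; rewrite -(sum_gunion_r g1 g2) u_ker.
Qed.

Lemma irreflexive_path m : irreflexive (path_graph m).
Proof. by move=> i; rewrite /path_graph orbb gtn_eqF. Qed.

Lemma irreflexive_gunion m k (g1 : graph m) (g2 : graph k) :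
  irreflexive g1 -> irreflexive g2 -> irreflexive (gunion g1 g2).
Proof. by move=> g1_irr g2_irr i; rewrite /gunion; case: split. Qed.

Lemma sum_gcompl_add m (g : graph m) (u : 'I_m -> R) j : irreflexive g ->
  \sum_i u i * (gcompl g i j)%:R + u j = \sum_i u i - \sum_i u i * (g i j)%:R.
Proof.
move=> g_irr; rewrite (bigD1 j) //= [X in _ = X - _](bigD1 j) //=.
rewrite [X in _ = _ - X](bigD1 j) //= /gcompl eqxx g_irr /= !mulr0 !add0r.
rewrite [LHS]addrC -[RHS]addrA; congr (_ + _).
rewrite -sumrB; apply: eq_bigr => i /negbTE i_neq_j.
by rewrite i_neq_j; case: (g i j); rewrite /= ?mulr1 ?subrr ?mulr0 ?subr0.
Qed.

Lemma trivial_kernel_gcompl_K1 m (g : graph m) :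
  irreflexive g -> trivial_kernel 0 g -> trivial_kernel 1 (gcompl (gunion g K1)).
Proof.
move=> g_irr g_ker u u_ker.
have G_irr : irreflexive (gunion g K1) by apply: irreflexive_gunion.
have u_eq j : \sum_i u i - \sum_i u i * (gunion g K1 i j)%:R = 0.
  by rewrite -sum_gcompl_add // -[u j]mul1r u_ker.
have sum0 : \sum_i u i = 0.
  have := u_eq (rshift m ord0); rewrite sum_gunion_r.
  by rewrite [X in _ - X]big1 ?subr0 // => i _; rewrite mulr0.
have u_left i : u (lshift 1 i) = 0.
  apply: (g_ker (fun i => u (lshift 1 i))) => j; rewrite mul0r addr0.
  by have /eqP := u_eq (lshift 1 j); rewrite sum_gunion_l sum0 sub0r oppr_eq0 => /eqP.
move=> i; case: (split_ordP i) => [i1 ->|i2 ->]; first exact: u_left.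
move: sum0; rewrite big_split_ord big1 => [|k _]; last exact: u_left.
by rewrite big_ord1 Monoid.mul1m (ord1 i2).
Qed.

End AdjacencyKernels.

Theorem proposition5p8 (R : realFieldType) (n : nat) :
  (4 <= n)%N -> (n %% 6 = 3)%N ->
  let G := gunion (gunion (path_graph 4) (path_graph (n - 5))) K1 in
  \rank (adjmx R G + 1%:M)%R = n /\ \rank (adjmx R (gcompl G) + 1%:M)%R = n.
Proof.
move=> n_ge4 n_mod6 G.
have card_G : (4 + (n - 5) + 1)%N = n by lia.
have k_mod3 : ((n - 5) %% 3 != 2)%N by apply/eqP; lia.
have k_even : ~~ odd (n - 5).
  have : ((n - 5) %% 2 = 0)%N by lia.
  by rewrite modn2 => /eqP; rewrite eqb0.
have paths_ker (c : R) : path_seq c 4 != 0 -> path_seq c (n - 5) != 0 ->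
    trivial_kernel c (gunion (path_graph 4) (path_graph (n - 5))).
  by move=> f4 fk; apply: trivial_kernel_gunion; apply: trivial_kernel_path.
have paths_irr : irreflexive (gunion (path_graph 4) (path_graph (n - 5))).
  by apply: irreflexive_gunion; apply: irreflexive_path.
split; rewrite -[RHS]card_G /G; apply: rank_adj_shift.
  exact: trivial_kernel_gunion (paths_ker 1 (@path_seq1_neq0 R 4 isT)
    (path_seq1_neq0 R k_mod3)) (@trivial_kernel_K1 R).
exact: trivial_kernel_gcompl_K1 paths_irr
  (paths_ker 0 (@path_seq0_neq0 R 4 isT) (path_seq0_neq0 R k_even)).
Qed.
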